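(* Let $T$ be a tree in which every nontrivial pseudo-supremum is a supremum. Then $T$ is monotonically normal in each of the coarse wedge topology, the fine wedge topology, and the chevron topology.
   Context: A tree is a partially ordered set in which the set of predecessors of each element is well-ordered. Levels: $T(0)$ is the set of minimal elements; $T(\alpha)$ is the set of minimal elements of $T\setminus\bigcup_{\beta<\alpha}T(\beta)$; successor levels are $T(\alpha+1)$. For a nonempty chain $C$ bounded above, its pseudo-supremum is the set of minimal upper bounds of $C$; the standing assumption is that each such set is a singleton. For $t\in T$, $V_t=\{s:s\ge t\}$. Fine wedge topology: subbase all $V_t$ and $T\setminus V_t$. Coarse wedge topology: subbase all $V_t$ and $T\setminus V_t$ with $t$ minimal or on a successor level. Chevron topology: base consisting of all $\{m\}$ with $m$ minimal, together with all sets $C[s,t]=(V_s\setminus V_t)\cup\{t\}$ where $s\le t$ and $s$ is minimal or on a successor level. *)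

From Stdlib Require Import List.
Import ListNotations.

Section Trees.
Context {T : Type} (le : T -> T -> Prop).

Definition lt (s t : T) : Prop := le s t /\ s <> t.

Definition well_ordered_set (A : T -> Prop) : Prop :=
  (forall x y, A x -> A y -> le x y \/ le y x) /\
  (forall B : T -> Prop, (forall x, B x -> A x) -> (exists x, B x) ->
     exists m, B m /\ forall x, B x -> le m x).

Record is_tree : Prop := {
  tree_refl : forall x, le x x;
  tree_antisym : forall x y, le x y -> le y x -> x = y;
  tree_trans : forall x y z, le x y -> le y z -> le x z;
  tree_pred_wo : forall t, well_ordered_set (fun s => lt s t)
}.

Definition minimal (t : T) : Prop := forall s, le s t -> s = t.

(* t lies on a successor level T(a+1) iff the (well-ordered) set of its
   predecessors has a greatest element, i.e. its order type is a
   successor ordinal. *)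
Definition on_successor_level (t : T) : Prop :=
  exists p, lt p t /\ forall s, lt s t -> le s p.

Definition minimal_or_successor (t : T) : Prop :=
  minimal t \/ on_successor_level t.

Definition chain (C : T -> Prop) : Prop :=
  forall x y, C x -> C y -> le x y \/ le y x.

Definition upper_bound (C : T -> Prop) (u : T) : Prop :=
  forall c, C c -> le c u.

Definition bounded_above (C : T -> Prop) : Prop := exists u, upper_bound C u.

Definition pseudo_sup (C : T -> Prop) : T -> Prop :=
  fun u => upper_bound C u /\ forall v, upper_bound C v -> le v u -> v = u.

Definition is_sup (C : T -> Prop) (u : T) : Prop :=
  upper_bound C u /\ forall v, upper_bound C v -> le u v.

Definition has_max (C : T -> Prop) : Prop :=
  exists m, C m /\ forall c, C c -> le c m.

Definition pseudo_sups_singleton : Prop :=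
  forall C, chain C -> (exists c, C c) -> bounded_above C ->
    exists u, forall v, pseudo_sup C v <-> v = u.

Definition nontrivial_pseudo_sups_are_sups : Prop :=
  forall C, chain C -> (exists c, C c) -> bounded_above C -> ~ has_max C ->
    forall u, pseudo_sup C u -> is_sup C u.

Definition V (t : T) : T -> Prop := fun s => le t s.

Definition compl (A : T -> Prop) : T -> Prop := fun s => ~ A s.

Definition fine_wedge_subbase (S : T -> Prop) : Prop :=
  exists t, S = V t \/ S = compl (V t).

Definition coarse_wedge_subbase (S : T -> Prop) : Prop :=
  exists t, minimal_or_successor t /\ (S = V t \/ S = compl (V t)).

Definition chevron_set (s t : T) : T -> Prop :=
  fun x => (V s x /\ ~ V t x) \/ x = t.

Definition chevron_base (B : T -> Prop) : Prop :=
  (exists m, minimal m /\ B = (fun x => x = m)) \/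
  (exists s t, le s t /\ minimal_or_successor s /\ B = chevron_set s t).

End Trees.

Definition open_from_subbase {T : Type} (S : (T -> Prop) -> Prop)
  (U : T -> Prop) : Prop :=
  (* U is a union of finite intersections of members of S *)
  forall x, U x -> exists l : list (T -> Prop),
    Forall S l /\ (forall A, In A l -> A x) /\
    (forall y, (forall A, In A l -> A y) -> U y).

Definition open_from_base {T : Type} (B : (T -> Prop) -> Prop)
  (U : T -> Prop) : Prop :=
  forall x, U x -> exists A, B A /\ A x /\ (forall y, A y -> U y).

Definition fine_wedge_open {T} (le : T -> T -> Prop) :=
  open_from_subbase (fine_wedge_subbase le).
Definition coarse_wedge_open {T} (le : T -> T -> Prop) :=
  open_from_subbase (coarse_wedge_subbase le).
Definition chevron_open {T} (le : T -> T -> Prop) :=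
  open_from_base (chevron_base le).

(* Monotone normality (pointwise Borges / Heath-Lutzer-Zenor form), for
   a topology given by its family of open sets; T1 is included. *)
Definition T1_space {T : Type} (open : (T -> Prop) -> Prop) : Prop :=
  forall x y : T, x <> y -> exists U, open U /\ U x /\ ~ U y.

Definition monotonically_normal {T : Type} (open : (T -> Prop) -> Prop) : Prop :=
  T1_space open /\
  exists H : T -> (T -> Prop) -> (T -> Prop),
    (forall x U, open U -> U x ->
       open (H x U) /\ H x U x /\ (forall z, H x U z -> U z)) /\
    (forall x y U V, open U -> open V -> U x -> V y ->
       (exists z, H x U z /\ H y V z) -> V x \/ U y).

From Stdlib Require Import List Classical ClassicalEpsilon.
Import ListNotations.

(** If x ⋢ y, the least s ⊑ x with s ⋢ y has all its predecessors below y,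
    so it cannot be a limit element: there it would be the pseudo-supremum,
    hence the supremum, of its predecessors, and y would lie above it. Thus
    s is minimal or on a successor level. This gives every point x a local
    base of wedges V_s \ (V_u1 ∪ ... ∪ V_un), with s ⊑ x minimal or successor
    and the u_i immediate successors of x (for the chevron topology: the sets
    C[s, x]). If two such basic neighbourhoods of x and y meet, one of them
    contains the other point, because their roots s are comparable; so
    choosing, for each open U ∋ x, a basic neighbourhood of x inside U is a
    monotone normality operator. *)

Lemma monotonically_normal_of_base {X : Type} (open : (X -> Prop) -> Prop)
    (B : X -> (X -> Prop) -> Prop) :
  (forall x W, B x W -> open W /\ W x) ->
  (forall x y, x <> y -> exists W, B x W /\ ~ W y) ->
  (forall x U, open U -> U x -> exists W, B x W /\ forall z, W z -> U z) ->
  (forall x y W W', B x W -> B y W' -> (exists z, W z /\ W' z) -> W' x \/ W y) ->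
  monotonically_normal open.
Proof.
  intros B_open B_separates B_local B_meet. split.
  - intros x y Hxy. destruct (B_separates x y Hxy) as [W [HW Hy]].
    exists W. destruct (B_open x W HW). auto.
  - set (H x U := epsilon (inhabits (fun _ : X => False))
                    (fun W => B x W /\ forall z, W z -> U z)).
    assert (H_spec : forall x U, open U -> U x ->
              B x (H x U) /\ forall z, H x U z -> U z).
    { intros x U HU HUx. apply epsilon_spec. apply B_local; assumption. }
    exists H. split.
    + intros x U HU HUx. destruct (H_spec x U HU HUx) as [HB Hsub].
      destruct (B_open x _ HB). auto.
    + intros x y U U' HU HU' HUx HU'y Hmeet.
      destruct (H_spec x U HU HUx) as [HB HsubU].
      destruct (H_spec y U' HU' HU'y) as [HB' HsubU'].
      destruct (B_meet x y _ _ HB HB' Hmeet); auto.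
Qed.

Section Tree.
Context {T : Type} (le : T -> T -> Prop).
Hypothesis tree : is_tree le.

Local Notation "x ⊑ y" := (le x y) (at level 70).
Local Notation "x ⊏ y" := (lt le x y) (at level 70).

Lemma comparable_below a b c : a ⊑ c -> b ⊑ c -> a ⊑ b \/ b ⊑ a.
Proof.
  intros Hac Hbc.
  destruct (classic (a = c)) as [-> | Ha]; [right; exact Hbc |].
  destruct (classic (b = c)) as [-> | Hb]; [left; exact Hac |].
  apply (proj1 (tree_pred_wo le tree c)); split; assumption.
Qed.

Lemma lt_not_ge a b : a ⊏ b -> ~ b ⊑ a.
Proof.
  intros [Hab Hne] Hba. apply Hne. exact (tree_antisym le tree a b Hab Hba).
Qed.

Lemma lt_le_trans a b c : a ⊏ b -> b ⊑ c -> a ⊏ c.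
Proof.
  intros Hab Hbc. split; [exact (tree_trans le tree a b c (proj1 Hab) Hbc) |].
  intros <-. exact (lt_not_ge a b Hab Hbc).
Qed.

Lemma exists_least_le (P : T -> Prop) x :
  P x -> exists m, m ⊑ x /\ P m /\ forall p, p ⊏ m -> ~ P p.
Proof.
  intros Px. destruct (classic (exists q, q ⊏ x /\ P q)) as [Hq | Hq].
  - destruct (proj2 (tree_pred_wo le tree x) (fun q => q ⊏ x /\ P q)
                (fun q Hq => proj1 Hq) Hq) as [m [[Hmx Pm] Hleast]].
    exists m. split; [exact (proj1 Hmx) | split; [exact Pm |]].
    intros p Hpm Pp. apply (lt_not_ge p m Hpm), Hleast.
    split; [exact (lt_le_trans p m x Hpm (proj1 Hmx)) | exact Pp].
  - exists x. split; [apply (tree_refl le tree) | split; [exact Px |]].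
    intros p Hpx Pp. apply Hq. exists p. split; assumption.
Qed.

Lemma exists_minimal_le x : exists r, minimal le r /\ r ⊑ x.
Proof.
  destruct (exists_least_le (fun _ => True) x I) as [r [Hrx [_ Hr]]].
  exists r. split; [| exact Hrx].
  intros s Hsr. apply NNPP. intros Hne. exact (Hr s (conj Hsr Hne) I).
Qed.

Definition immediate_succ (x u : T) : Prop :=
  x ⊏ u /\ forall w, x ⊏ w -> w ⊑ u -> w = u.

Lemma exists_immediate_succ_le x t : x ⊏ t -> exists u, immediate_succ x u /\ u ⊑ t.
Proof.
  intros Hxt.
  destruct (exists_least_le (fun q => x ⊏ q) t Hxt) as [u [Hut [Hxu Hleast]]].
  exists u. split; [split; [exact Hxu |] | exact Hut].
  intros w Hxw Hwu. apply NNPP. intros Hne. exact (Hleast w (conj Hwu Hne) Hxw).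
Qed.

Lemma immediate_succ_on_successor_level x u :
  immediate_succ x u -> on_successor_level le u.
Proof.
  intros [Hxu Himm]. exists x. split; [exact Hxu |].
  intros s Hsu.
  destruct (comparable_below s x u (proj1 Hsu) (proj1 Hxu)) as [Hsx | Hxs];
    [exact Hsx |].
  destruct (classic (x = s)) as [<- | Hne]; [apply (tree_refl le tree) |].
  exfalso. apply (proj2 Hsu). apply Himm; [split; assumption | exact (proj1 Hsu)].
Qed.

Section NontrivialSups.
Hypothesis sups : nontrivial_pseudo_sups_are_sups le.

Lemma limit_is_sup_of_predecessors m :
  ~ minimal le m -> ~ on_successor_level le m -> is_sup le (fun p => p ⊏ m) m.
Proof.
  intros Hmin Hsucc. set (P := fun p => p ⊏ m).
  assert (P_chain : chain le P).
  { intros a b Ha Hb. exact (proj1 (tree_pred_wo le tree m) a b Ha Hb). }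
  assert (P_nonempty : exists p, P p).
  { apply NNPP. intros Hno. apply Hmin. intros s Hsm.
    apply NNPP. intros Hne. apply Hno. exists s. split; assumption. }
  assert (P_ub : upper_bound le P m) by (intros c Hc; exact (proj1 Hc)).
  assert (P_nomax : ~ has_max le P).
  { intros [p [Hp Hmax]]. apply Hsucc. exists p. split; assumption. }
  apply (sups P P_chain P_nonempty (ex_intro _ m P_ub) P_nomax).
  split; [exact P_ub |].
  intros v Hv Hvm. apply NNPP. intros Hne.
  apply P_nomax. exists v. split; [split; assumption | exact Hv].
Qed.

Lemma exists_minimal_or_successor_separating x y :
  ~ x ⊑ y -> exists s, minimal_or_successor le s /\ s ⊑ x /\ ~ s ⊑ y.
Proof.
  intros Hxy.
  destruct (exists_least_le (fun q => ~ q ⊑ y) x Hxy) as [m [Hmx [Hmy Hleast]]].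
  exists m. split; [| split; assumption].
  destruct (classic (minimal le m)) as [Hmin | Hmin]; [left; exact Hmin |].
  destruct (classic (on_successor_level le m)) as [Hs | Hs]; [right; exact Hs |].
  exfalso. apply Hmy, (proj2 (limit_is_sup_of_predecessors m Hmin Hs)).
  intros p Hp. apply NNPP. exact (Hleast p Hp).
Qed.

End NontrivialSups.

Definition wedge (s : T) (F : list T) : T -> Prop :=
  fun w => s ⊑ w /\ forall u, In u F -> ~ u ⊑ w.

Lemma wedge_app_sub s1 s2 F1 F2 w :
  s1 ⊑ s2 -> wedge s2 (F1 ++ F2) w -> wedge s1 F1 w /\ wedge s2 F2 w.
Proof.
  intros H12 [H2w HF]. split; split.
  - exact (tree_trans le tree _ _ _ H12 H2w).
  - intros u Hu. apply HF, in_or_app. left. exact Hu.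
  - exact H2w.
  - intros u Hu. apply HF, in_or_app. right. exact Hu.
Qed.

Section WedgeTopology.
Variable good : T -> Prop.
Variable S : (T -> Prop) -> Prop.
Hypothesis S_spec :
  forall A, S A <-> exists t, good t /\ (A = V le t \/ A = compl (V le t)).
Hypothesis good_below : forall x, exists s, good s /\ s ⊑ x.
Hypothesis good_separates :
  forall x y, ~ x ⊑ y -> exists s, good s /\ s ⊑ x /\ ~ s ⊑ y.
Hypothesis good_immediate_succ : forall x u, immediate_succ x u -> good u.

Definition wedge_nbhd (x : T) (W : T -> Prop) : Prop :=
  exists s F, good s /\ s ⊑ x /\ (forall u, In u F -> immediate_succ x u) /\
    W = wedge s F.

Lemma wedge_nbhd_nil x s : good s -> s ⊑ x -> wedge_nbhd x (wedge s []).
Proof.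
  intros Hs Hsx. exists s, [].
  split; [exact Hs | split; [exact Hsx | split; [intros u [] | reflexivity]]].
Qed.

Lemma wedge_open s F :
  good s -> (forall u, In u F -> good u) -> open_from_subbase S (wedge s F).
Proof.
  intros Hs HF w Hw.
  exists (V le s :: map (fun u => compl (V le u)) F). split; [| split].
  - constructor.
    + apply S_spec. exists s. auto.
    + apply Forall_forall. intros A HA.
      apply in_map_iff in HA. destruct HA as [u [<- Hu]].
      apply S_spec. exists u. auto.
  - intros A [<- | HA]; [exact (proj1 Hw) |].
    apply in_map_iff in HA. destruct HA as [u [<- Hu]]. exact (proj2 Hw u Hu).
  - intros y Hy. split; [exact (Hy _ (or_introl eq_refl)) |].
    intros u Hu. apply (Hy (compl (V le u))). right. apply in_map_iff. eauto.
Qed.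

Lemma wedge_nbhd_open x W : wedge_nbhd x W -> open_from_subbase S W /\ W x.
Proof.
  intros [s [F [Hs [Hsx [HF ->]]]]]. split.
  - apply wedge_open; [exact Hs |].
    intros u Hu. exact (good_immediate_succ x u (HF u Hu)).
  - split; [exact Hsx |]. intros u Hu. exact (lt_not_ge x u (proj1 (HF u Hu))).
Qed.

Lemma wedge_nbhd_avoiding x t :
  ~ t ⊑ x -> exists W, wedge_nbhd x W /\ forall w, W w -> ~ t ⊑ w.
Proof.
  intros Htx. destruct (classic (x ⊑ t)) as [Hxt | Hxt].
  - assert (Hlt : x ⊏ t) by (split; [exact Hxt | intros ->; exact (Htx Hxt)]).
    destruct (exists_immediate_succ_le x t Hlt) as [u [Hu Hut]].
    destruct (good_below x) as [s [Hs Hsx]].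
    exists (wedge s [u]). split.
    + exists s, [u]. split; [exact Hs | split; [exact Hsx | split; [| reflexivity]]].
      intros v [<- | []]. exact Hu.
    + intros w [_ Hw] Htw.
      exact (Hw u (or_introl eq_refl) (tree_trans le tree _ _ _ Hut Htw)).
  - destruct (good_separates x t Hxt) as [s [Hs [Hsx Hst]]].
    exists (wedge s []). split; [exact (wedge_nbhd_nil x s Hs Hsx) |].
    intros w [Hsw _] Htw.
    destruct (comparable_below s t w Hsw Htw) as [H | H]; [exact (Hst H) |].
    exact (Htx (tree_trans le tree _ _ _ H Hsx)).
Qed.

Lemma wedge_nbhd_separates x y : x <> y -> exists W, wedge_nbhd x W /\ ~ W y.
Proof.
  intros Hxy. destruct (classic (x ⊑ y)) as [Hle | Hle].
  - assert (Hyx : ~ y ⊑ x)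
      by (intros Hyx; exact (Hxy (tree_antisym le tree x y Hle Hyx))).
    destruct (wedge_nbhd_avoiding x y Hyx) as [W [HW Hy]].
    exists W. split; [exact HW |]. intros Wy. exact (Hy y Wy (tree_refl le tree y)).
  - destruct (good_separates x y Hle) as [s [Hs [Hsx Hsy]]].
    exists (wedge s []). split; [exact (wedge_nbhd_nil x s Hs Hsx) |].
    intros [Hy _]. exact (Hsy Hy).
Qed.

Lemma wedge_nbhd_inside_subbasic x A :
  S A -> A x -> exists W, wedge_nbhd x W /\ forall w, W w -> A w.
Proof.
  intros HA Ax. apply S_spec in HA. destruct HA as [t [Ht [-> | ->]]].
  - exists (wedge t []). split; [exact (wedge_nbhd_nil x t Ht Ax) |].
    intros w [Hw _]. exact Hw.
  - exact (wedge_nbhd_avoiding x t Ax).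
Qed.

Lemma wedge_nbhd_inter x W1 W2 :
  wedge_nbhd x W1 -> wedge_nbhd x W2 ->
  exists W, wedge_nbhd x W /\ forall w, W w -> W1 w /\ W2 w.
Proof.
  intros [s1 [F1 [Hs1 [Hs1x [HF1 ->]]]]] [s2 [F2 [Hs2 [Hs2x [HF2 ->]]]]].
  destruct (comparable_below s1 s2 x Hs1x Hs2x) as [H12 | H21].
  - exists (wedge s2 (F1 ++ F2)). split.
    + exists s2, (F1 ++ F2).
      split; [exact Hs2 | split; [exact Hs2x | split; [| reflexivity]]].
      intros u Hu. destruct (in_app_or _ _ _ Hu); auto.
    + intros w Hw. exact (wedge_app_sub s1 s2 F1 F2 w H12 Hw).
  - exists (wedge s1 (F2 ++ F1)). split.
    + exists s1, (F2 ++ F1).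
      split; [exact Hs1 | split; [exact Hs1x | split; [| reflexivity]]].
      intros u Hu. destruct (in_app_or _ _ _ Hu); auto.
    + intros w Hw. apply and_comm. exact (wedge_app_sub s2 s1 F2 F1 w H21 Hw).
Qed.

Lemma wedge_nbhd_inside_open x U :
  open_from_subbase S U -> U x -> exists W, wedge_nbhd x W /\ forall w, W w -> U w.
Proof.
  intros HU Ux. destruct (HU x Ux) as [l [Hl [Hlx Hsub]]].
  enough (Hinter : exists W, wedge_nbhd x W /\ forall w, W w -> forall A, In A l -> A w).
  { destruct Hinter as [W [HW HWl]].
    exists W. split; [exact HW |]. intros w Hw. exact (Hsub w (HWl w Hw)). }
  clear Hsub. induction l as [| A l IH].
  - destruct (good_below x) as [s [Hs Hsx]].
    exists (wedge s []). split; [exact (wedge_nbhd_nil x s Hs Hsx) |].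
    intros w _ A [].
  - apply Forall_cons_iff in Hl. destruct Hl as [HA Hl].
    destruct (wedge_nbhd_inside_subbasic x A HA (Hlx A (or_introl eq_refl)))
      as [W1 [HW1 HW1A]].
    destruct IH as [W2 [HW2 HW2l]];
      [exact Hl | intros B HB; exact (Hlx B (or_intror HB)) |].
    destruct (wedge_nbhd_inter x W1 W2 HW1 HW2) as [W [HW HWsub]].
    exists W. split; [exact HW |].
    intros w Hw B [<- | HB].
    + exact (HW1A w (proj1 (HWsub w Hw))).
    + exact (HW2l w (proj2 (HWsub w Hw)) B HB).
Qed.

Lemma wedge_meet_half x y z s1 s2 F1 F2 :
  s1 ⊑ s2 -> s2 ⊑ y -> s2 ⊑ z ->
  (forall u, In u F1 -> immediate_succ x u) ->
  (forall u, In u F2 -> immediate_succ y u) ->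
  wedge s1 F1 z -> wedge s2 F2 x \/ wedge s1 F1 y.
Proof.
  intros H12 H2y H2z HF1 HF2 [_ Hz].
  destruct (classic (wedge s1 F1 y)) as [Hy | Hy]; [right; exact Hy | left].
  assert (Hu : exists u, In u F1 /\ u ⊑ y).
  { apply NNPP. intros Hno. apply Hy.
    split; [exact (tree_trans le tree _ _ _ H12 H2y) |].
    intros u Hu Huy. apply Hno. exists u. split; assumption. }
  destruct Hu as [u [Hu Huy]]. destruct (HF1 u Hu) as [Hxu Hsucc].
  assert (Hxy : x ⊑ y) by exact (tree_trans le tree _ _ _ (proj1 Hxu) Huy).
  destruct (classic (s2 ⊑ x)) as [H2x | H2x].
  - split; [exact H2x |]. intros v Hv Hvx.
    exact (lt_not_ge y v (proj1 (HF2 v Hv)) (tree_trans le tree _ _ _ Hvx Hxy)).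
  - exfalso.
    destruct (comparable_below s2 x y H2y Hxy) as [H | Hx2]; [exact (H2x H) |].
    destruct (comparable_below u s2 y Huy H2y) as [Hu2 | H2u].
    + exact (Hz u Hu (tree_trans le tree _ _ _ Hu2 H2z)).
    + assert (s2 = u) as <-.
      { apply Hsucc; [split; [exact Hx2 | intros ->; exact (H2x Hx2)] | exact H2u]. }
      exact (Hz s2 Hu H2z).
Qed.

Lemma wedge_nbhd_meet x y W W' :
  wedge_nbhd x W -> wedge_nbhd y W' -> (exists z, W z /\ W' z) -> W' x \/ W y.
Proof.
  intros [s1 [F1 [_ [Hs1x [HF1 ->]]]]] [s2 [F2 [_ [Hs2y [HF2 ->]]]]] [z [Hz1 Hz2]].
  destruct (comparable_below s1 s2 z (proj1 Hz1) (proj1 Hz2)) as [H12 | H21].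
  - exact (wedge_meet_half x y z s1 s2 F1 F2 H12 Hs2y (proj1 Hz2) HF1 HF2 Hz1).
  - destruct (wedge_meet_half y x z s2 s1 F2 F1 H21 Hs1x (proj1 Hz1) HF2 HF1 Hz2);
      auto.
Qed.

Lemma wedge_monotonically_normal : monotonically_normal (open_from_subbase S).
Proof.
  apply (monotonically_normal_of_base _ wedge_nbhd).
  - exact wedge_nbhd_open.
  - exact wedge_nbhd_separates.
  - exact wedge_nbhd_inside_open.
  - exact wedge_nbhd_meet.
Qed.

End WedgeTopology.

Lemma fine_wedge_monotonically_normal : monotonically_normal (fine_wedge_open le).
Proof.
  apply (wedge_monotonically_normal (fun _ => True)).
  - intros A. split.
    + intros [t Ht]. exists t. split; [exact I | exact Ht].
    + intros [t [_ Ht]]. exists t. exact Ht.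
  - intros x. exists x. split; [exact I | apply (tree_refl le tree)].
  - intros x y Hxy. exists x.
    split; [exact I | split; [apply (tree_refl le tree) | exact Hxy]].
  - intros _ _ _. exact I.
Qed.

Lemma coarse_wedge_monotonically_normal :
  nontrivial_pseudo_sups_are_sups le -> monotonically_normal (coarse_wedge_open le).
Proof.
  intros sups. apply (wedge_monotonically_normal (minimal_or_successor le)).
  - intros A. reflexivity.
  - intros x. destruct (exists_minimal_le x) as [r [Hr Hrx]].
    exists r. split; [left; exact Hr | exact Hrx].
  - exact (exists_minimal_or_successor_separating sups).
  - intros x u Hu. right. exact (immediate_succ_on_successor_level x u Hu).
Qed.

Section ChevronTopology.
Hypothesis sups : nontrivial_pseudo_sups_are_sups le.

Definition chevron_nbhd (x : T) (W : T -> Prop) : Prop :=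
  exists s, minimal_or_successor le s /\ s ⊑ x /\ W = chevron_set le s x.

Lemma chevron_nbhd_open x W : chevron_nbhd x W -> chevron_open le W /\ W x.
Proof.
  intros [s [Hs [Hsx ->]]]. split; [| right; reflexivity].
  intros w Hw. exists (chevron_set le s x).
  split; [right; exists s, x; auto | split; auto].
Qed.

Lemma chevron_nbhd_separates x y : x <> y -> exists W, chevron_nbhd x W /\ ~ W y.
Proof.
  intros Hxy. destruct (classic (x ⊑ y)) as [Hle | Hle].
  - destruct (exists_minimal_le x) as [r [Hr Hrx]].
    exists (chevron_set le r x). split; [exists r; split; [left |]; auto |].
    intros [[_ Hy] | Hy]; [exact (Hy Hle) | exact (Hxy (eq_sym Hy))].
  - destruct (exists_minimal_or_successor_separating sups x y Hle)
      as [s [Hs [Hsx Hsy]]].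
    exists (chevron_set le s x). split; [exists s; auto |].
    intros [[Hy _] | Hy]; [exact (Hsy Hy) | exact (Hxy (eq_sym Hy))].
Qed.

Lemma chevron_nbhd_inside_basic x A :
  chevron_base le A -> A x -> exists W, chevron_nbhd x W /\ forall w, W w -> A w.
Proof.
  intros [[m [Hm ->]] | [s [t [Hst [Hs ->]]]]] Ax.
  - subst x. exists (chevron_set le m m). split.
    + exists m. split; [left; exact Hm | split; [apply (tree_refl le tree) | reflexivity]].
    + intros w [[Hmw Hnot] | Hw]; [contradiction | exact Hw].
  - destruct Ax as [[Hsx Htx] | ->];
      [| exists (chevron_set le s t); split; [exists s |]; auto].
    destruct (classic (x ⊑ t)) as [Hxt | Hxt].
    + exists (chevron_set le s x). split; [exists s; auto |].
      intros w [[Hsw Hxw] | ->]; left; split; auto.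
      intros Htw. exact (Hxw (tree_trans le tree _ _ _ Hxt Htw)).
    + destruct (exists_minimal_or_successor_separating sups x t Hxt)
        as [s' [Hs' [Hs'x Hs't]]].
      assert (Hss' : s ⊑ s').
      { destruct (comparable_below s s' x Hsx Hs'x) as [H | H]; [exact H |].
        exfalso. exact (Hs't (tree_trans le tree _ _ _ H Hst)). }
      exists (chevron_set le s' x). split; [exists s'; auto |].
      intros w [[Hs'w _] | ->]; left; split; auto.
      * exact (tree_trans le tree _ _ _ Hss' Hs'w).
      * intros Htw.
        destruct (comparable_below s' t w Hs'w Htw) as [H | H]; [exact (Hs't H) |].
        exact (Htx (tree_trans le tree _ _ _ H Hs'x)).
Qed.

Lemma chevron_nbhd_inside_open x U :
  chevron_open le U -> U x -> exists W, chevron_nbhd x W /\ forall w, W w -> U w.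
Proof.
  intros HU Ux. destruct (HU x Ux) as [A [HA [Ax HAU]]].
  destruct (chevron_nbhd_inside_basic x A HA Ax) as [W [HW HWA]].
  exists W. split; [exact HW |]. intros w Hw. exact (HAU w (HWA w Hw)).
Qed.

Lemma chevron_meet_half x y z s1 s2 :
  s1 ⊑ s2 -> s2 ⊑ y -> s2 ⊑ z -> ~ x ⊑ z ->
  chevron_set le s2 y x \/ chevron_set le s1 x y.
Proof.
  intros H12 H2y H2z Hxz.
  destruct (classic (x = y)) as [-> | Hne]; [left; right; reflexivity |].
  destruct (classic (x ⊑ y)) as [Hxy | Hxy].
  - left. left.
    destruct (comparable_below s2 x y H2y Hxy) as [H2x | Hx2].
    + split; [exact H2x |]. intros Hyx. exact (Hne (tree_antisym le tree x y Hxy Hyx)).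
    + exfalso. exact (Hxz (tree_trans le tree _ _ _ Hx2 H2z)).
  - right. left. split; [exact (tree_trans le tree _ _ _ H12 H2y) | exact Hxy].
Qed.

Lemma chevron_nbhd_meet x y W W' :
  chevron_nbhd x W -> chevron_nbhd y W' -> (exists z, W z /\ W' z) -> W' x \/ W y.
Proof.
  intros [s1 [_ [Hs1x ->]]] [s2 [_ [Hs2y ->]]] [z [Hz1 Hz2]].
  destruct Hz1 as [[H1z Hxz] | ->]; [| left; exact Hz2].
  destruct Hz2 as [[H2z Hyz] | ->]; [| right; left; split; assumption].
  destruct (comparable_below s1 s2 z H1z H2z) as [H12 | H21].
  - exact (chevron_meet_half x y z s1 s2 H12 Hs2y H2z Hxz).
  - destruct (chevron_meet_half y x z s2 s1 H21 Hs1x H1z Hyz); auto.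
Qed.

Lemma chevron_monotonically_normal : monotonically_normal (chevron_open le).
Proof.
  apply (monotonically_normal_of_base _ chevron_nbhd).
  - exact chevron_nbhd_open.
  - exact chevron_nbhd_separates.
  - exact chevron_nbhd_inside_open.
  - exact chevron_nbhd_meet.
Qed.

End ChevronTopology.

End Tree.

Theorem theorem4p2 (T : Type) (le : T -> T -> Prop) :
  is_tree le ->
  pseudo_sups_singleton le ->
  nontrivial_pseudo_sups_are_sups le ->
  monotonically_normal (coarse_wedge_open le) /\
  monotonically_normal (fine_wedge_open le) /\
  monotonically_normal (chevron_open le).
Proof.
  intros tree _ sups. split; [| split].
  - exact (coarse_wedge_monotonically_normal le tree sups).
  - exact (fine_wedge_monotonically_normal le tree).
  - exact (chevron_monotonically_normal le tree sups).
Qed.
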